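(* Let $n\ge2$, $q^{\min}=\bar q_0(\{1,2\})$ and $q^{\max}=\bar q_0(\{1\})$. With $v_1(q)=V(qe^{\theta_1-1})$, the function $$R(q)=\frac{v_1(q)}{1-v_1(q)}+\frac{1}{q+v_1(q)}-1$$ is quasi-convex on $[q^{\min},q^{\max}]$, with no restriction on the value of $v_1$.
   Context: Sellers $\mathbb{S}=\{1,\dots,n\}$ with qualities $\theta_1\ge\dots\ge\theta_n\ge0$. $V:(0,\infty)\to(0,1)$: $V(x)=$ the unique $v\in(0,1)$ with $v\exp(v/(1-v))=x$. For nonempty $T\subseteq\mathbb{S}$, $\bar q_0(T)\in(0,1)$ is the unique solution of $\sum_{i\in T}V(\bar q_0e^{\theta_i-1})=1-\bar q_0$. A function $f$ on an interval is quasi-convex if $f(\lambda x+(1-\lambda)y)\le\max\{f(x),f(y)\}$ for all $x,y$ in the interval and $\lambda\in[0,1]$. *)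

From Stdlib Require Import Reals Lra List ClassicalEpsilon.
Open Scope R_scope.

Definition V_spec (x v : R) : Prop := 0 < v < 1 /\ v * exp (v / (1 - v)) = x.
Definition V (x : R) : R := epsilon (inhabits 0) (fun v => V_spec x v).

(* Sellers are indexed by naturals 1..n, qualities theta : nat -> R.
   A subset T of sellers is given as a list of indices.
   qbar0 theta T = the unique q in (0,1) with
     sum_{i in T} V(q e^{theta_i - 1}) = 1 - q. *)
Definition sumV (theta : nat -> R) (T : list nat) (q : R) : R :=
  fold_right (fun i acc => V (q * exp (theta i - 1)) + acc) 0 T.
Definition qbar0_spec (theta : nat -> R) (T : list nat) (q : R) : Prop :=
  0 < q < 1 /\ sumV theta T q = 1 - q.
Definition qbar0 (theta : nat -> R) (T : list nat) : R :=
  epsilon (inhabits 0) (fun q => qbar0_spec theta T q).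

Definition quasi_convex_on (f : R -> R) (a b : R) : Prop :=
  forall x y lam, a <= x <= b -> a <= y <= b -> 0 <= lam <= 1 ->
    f (lam * x + (1 - lam) * y) <= Rmax (f x) (f y).

Definition v1 (theta : nat -> R) (q : R) : R := V (q * exp (theta 1%nat - 1)).
Definition Rfun (theta : nat -> R) (q : R) : R :=
  v1 theta q / (1 - v1 theta q) + 1 / (q + v1 theta q) - 1.

(* Write u = v/(1-v) for the odds of v. From v e^u = q e^{theta_1 - 1} one gets
   q = c v e^u with c = e^{1 - theta_1}, and R becomes a function of u alone,
     R_of_odds c u = u + (1+u) / (u (1 + c e^u)) - 1.
   Since u is a nondecreasing function of q, it suffices to show that
   R_of_odds c is quasi-convex on (0,oo). Its derivative has the sign of
     slope_num c u = (u^2-1) + c e^u (u^2-u-1) + (c e^u)^2 u^2,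
   which changes sign at most once, from - to +: for u^2 >= u+1 it is
   clearly positive, and below that it is (c e^u)^2 times a function that is
   increasing there. A differentiable function with such a derivative is
   quasi-convex by the mean value theorem. *)

From Stdlib Require Import Reals Lra List ClassicalEpsilon Ranalysis5.
From Coquelicot Require Import Coquelicot.
Open Scope R_scope.

Definition odds (v : R) : R := v / (1 - v).

Lemma odds_lt (a b : R) : a < b -> b < 1 -> odds a < odds b.
Proof.
  intros Hab Hb. unfold odds. apply Rlt_0_minus.
  replace (b / (1 - b) - a / (1 - a)) with ((b - a) / ((1 - a) * (1 - b))) by (field; lra).
  apply Rdiv_lt_0_compat; nra.
Qed.

(* h(v) = v e^{v/(1-v)} is the function that V inverts on (0,1). *)
Definition h (v : R) : R := v * exp (odds v).

Lemma h_pos (a : R) : 0 < a -> a < 1 -> 0 < h a.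
Proof. intros. unfold h. pose proof (exp_pos (odds a)). nra. Qed.

Lemma h_lt (a b : R) : 0 < a -> a < b -> b < 1 -> h a < h b.
Proof.
  intros Ha Hab Hb. unfold h.
  pose proof (exp_increasing _ _ (odds_lt a b Hab Hb)).
  pose proof (exp_pos (odds a)). nra.
Qed.

Lemma h_unbounded (x : R) : 0 < x -> x < h ((x + 1) / (x + 2)).
Proof.
  intros Hx. unfold h, odds.
  replace ((x + 1) / (x + 2) / (1 - (x + 1) / (x + 2))) with (x + 1) by (field; lra).
  assert (1 + (x + 1) < exp (x + 1)) by (apply exp_ineq1; lra).
  assert (0 < (x + 1) / (x + 2)) by (apply Rdiv_lt_0_compat; lra).
  assert ((x + 1) / (x + 2) * (x + 2) = x + 1) by (field; lra).
  nra.
Qed.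

Lemma h_continuous (a : R) : a < 1 -> continuity_pt h a.
Proof.
  intros Ha. apply derivable_continuous_pt.
  exists (Derive h a). apply is_derive_Reals, Derive_correct.
  unfold h, odds. auto_derive. lra.
Qed.

(* V x is well defined for x > 0: by the intermediate value theorem h takes
   the value x on (0,1), so the choice in the definition of V succeeds. *)
Lemma V_correct (x : R) : 0 < x -> h (V x) = x /\ 0 < V x < 1.
Proof.
  intros Hx.
  assert (Hspec : V_spec x (V x)).
  { unfold V. apply epsilon_spec.
    set (b := (x + 1) / (x + 2)).
    assert (Hb : 0 < b < 1).
    { unfold b. split; [apply Rdiv_lt_0_compat | apply Rlt_div_l]; lra. }
    destruct (IVT_interv (fun v => h v - x) 0 b) as [z [Hz Hroot]].
    - intros a Ha. apply continuity_pt_minus.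
      + apply h_continuous; lra.
      + apply continuity_pt_const. intros ? ?; reflexivity.
    - lra.
    - unfold h. rewrite Rmult_0_l. lra.
    - pose proof (h_unbounded x Hx) as Hbig. fold b in Hbig. lra.
    - exists z. unfold h, odds in Hroot. assert (z <> 0) by (intros ->; lra).
      split; lra. }
  destruct Hspec as [Hbounds Heq]. split; assumption.
Qed.

Lemma V_ge_of (x w : R) : 0 < x -> 0 < w < 1 -> h w <= x -> w <= V x.
Proof.
  intros Hx Hw Hxw. destruct (V_correct x Hx) as [Hh HV].
  destruct (Rle_or_lt w (V x)) as [| Hlt]; [assumption |].
  pose proof (h_lt (V x) w ltac:(lra) Hlt ltac:(lra)). lra.
Qed.

Lemma V_le_of (x w : R) : 0 < x -> 0 < w < 1 -> x <= h w -> V x <= w.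
Proof.
  intros Hx Hw Hxw. destruct (V_correct x Hx) as [Hh HV].
  destruct (Rle_or_lt (V x) w) as [| Hlt]; [assumption |].
  pose proof (h_lt w (V x) ltac:(lra) Hlt ltac:(lra)). lra.
Qed.

Lemma V_le (x y : R) : 0 < x -> x <= y -> V x <= V y.
Proof.
  intros Hx Hxy. destruct (V_correct x Hx) as [Hh HV].
  apply V_ge_of; lra.
Qed.

(* V is continuous on (0,oo), as the inverse of the continuous increasing h
   on a small interval around V x. *)
Lemma V_continuous (x : R) : 0 < x -> continuity_pt V x.
Proof.
  intros Hx. destruct (V_correct x Hx) as [Hh HV].
  set (lb := V x / 2). set (ub := (1 + V x) / 2).
  assert (Hbounds : 0 < lb < V x /\ V x < ub < 1) by (unfold lb, ub; lra).
  assert (Hhlb : 0 < h lb) by (apply h_pos; lra).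
  apply (continuity_pt_recip_interv h V lb ub).
  - lra.
  - intros a b Ha Hab Hb. apply h_lt; lra.
  - intros y Hy _. apply (V_correct y). lra.
  - intros y Hy1 Hy2. split.
    + apply V_ge_of; lra.
    + apply V_le_of; lra.
  - intros a Ha. apply h_continuous. lra.
  - rewrite <- Hh. split; apply h_lt; lra.
Qed.

Lemma V_scaled_correct (A q : R) : 0 < A -> 0 < q -> 0 < V (q * A) < 1.
Proof. intros HA Hq. apply (V_correct (q * A)). nra. Qed.

Lemma sumV_nonneg (theta : nat -> R) (T : list nat) (q : R) :
  0 < q -> 0 <= sumV theta T q.
Proof.
  intros Hq. induction T as [| i T IH]; simpl; [lra |].
  pose proof (V_scaled_correct (exp (theta i - 1)) q (exp_pos _) Hq). fold (sumV theta T q). lra.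
Qed.

Lemma sumV_continuous (theta : nat -> R) (T : list nat) (q : R) :
  0 < q -> continuity_pt (sumV theta T) q.
Proof.
  intros Hq. induction T as [| i T IH].
  - apply continuity_pt_const. intros ? ?; reflexivity.
  - change (continuity_pt (fun p => V (p * exp (theta i - 1)) + sumV theta T p) q).
    apply continuity_pt_plus; [| exact IH].
    apply (continuity_pt_comp (fun p => p * exp (theta i - 1)) V).
    + apply continuity_pt_mult; [apply continuity_pt_id |].
      apply continuity_pt_const. intros ? ?; reflexivity.
    + apply V_continuous. pose proof (exp_pos (theta i - 1)). nra.
Qed.

Lemma sumV_small (theta : nat -> R) (T : list nat) (eps : R) :
  0 < eps -> exists q0, 0 < q0 /\ forall q, 0 < q <= q0 -> sumV theta T q < eps.
Proof.
  revert eps. induction T as [| i T IH]; intros eps Heps.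
  - exists 1. split; [lra |]. intros q _. simpl. lra.
  - destruct (IH (eps / 2) ltac:(lra)) as [q1 [Hq1 Hsmall]].
    set (w := Rmin (eps / 2) (1 / 2)). set (A := exp (theta i - 1)).
    assert (Hw : 0 < w <= eps / 2 /\ w <= 1 / 2).
    { unfold w. split; [split |]; [apply Rmin_pos | apply Rmin_l | apply Rmin_r]; lra. }
    assert (HA : 0 < A) by apply exp_pos.
    assert (Hhw : 0 < h w) by (apply h_pos; lra).
    exists (Rmin q1 (h w / A)). split; [apply Rmin_pos; [lra | apply Rdiv_lt_0_compat; lra] |].
    intros q [Hq Hqle].
    pose proof (Rmin_l q1 (h w / A)) as Hm1. pose proof (Rmin_r q1 (h w / A)) as Hm2.
    assert (HqA : q * A <= h w).
    { replace (h w) with (h w / A * A) by (field; lra). apply Rmult_le_compat_r; lra. }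
    pose proof (V_le_of (q * A) w ltac:(nra) ltac:(lra) HqA).
    pose proof (Hsmall q ltac:(lra)).
    simpl. fold A (sumV theta T q). lra.
Qed.

(* For every nonempty set of sellers T, qbar0 T is a genuine root in (0,1):
   q |-> sumV T q + q - 1 is continuous, negative near 0 and positive at 1. *)
Lemma qbar0_correct (theta : nat -> R) (T : list nat) :
  T <> nil -> qbar0_spec theta T (qbar0 theta T).
Proof.
  intros HT. unfold qbar0. apply epsilon_spec.
  set (F := fun q => sumV theta T q + q - 1).
  destruct (sumV_small theta T (1 / 2) ltac:(lra)) as [q0 [Hq0 Hsmall]].
  set (a := Rmin q0 (1 / 4)).
  assert (Ha : 0 < a <= q0 /\ a <= 1 / 4).
  { unfold a. split; [split |]; [apply Rmin_pos | apply Rmin_l | apply Rmin_r]; lra. }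
  assert (HF1 : 0 < F 1).
  { unfold F. destruct T as [| i T]; [contradiction |]. simpl.
    pose proof (V_scaled_correct (exp (theta i - 1)) 1 (exp_pos _) ltac:(lra)).
    pose proof (sumV_nonneg theta T 1 ltac:(lra)). fold (sumV theta T 1). lra. }
  destruct (IVT_interv F a 1) as [z [Hz Hroot]].
  - intros p Hp. unfold F. apply continuity_pt_minus.
    + apply continuity_pt_plus; [apply sumV_continuous; lra | apply continuity_pt_id].
    + apply continuity_pt_const. intros ? ?; reflexivity.
  - lra.
  - unfold F. pose proof (Hsmall a ltac:(lra)). lra.
  - exact HF1.
  - exists z. assert (z <> 1) by (intros ->; lra).
    unfold qbar0_spec. unfold F in Hroot. split; lra.
Qed.

(* Quasi-convexity on the open ray (a,oo), in the equivalent form that f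
   never exceeds its endpoint values inside an interval. *)
Definition quasi_convex_above (f : R -> R) (a : R) : Prop :=
  forall x z y, a < x -> x <= z <= y -> f z <= Rmax (f x) (f y).

(* A differentiable function whose derivative, once positive, stays positive
   (it decreases, then increases) is quasi-convex: an interior value above
   both endpoint values would force f' > 0 before and f' < 0 after it. *)
Lemma quasi_convex_above_of_derivative (f f' : R -> R) (a : R) :
  (forall x, a < x -> derivable_pt_lim f x (f' x)) ->
  (forall x y, a < x -> x < y -> 0 < f' x -> 0 < f' y) ->
  quasi_convex_above f a.
Proof.
  intros Hder Hcross x z y Hx [Hxz Hzy].
  pose proof (Rmax_l (f x) (f y)). pose proof (Rmax_r (f x) (f y)).
  destruct (Rle_or_lt (f z) (Rmax (f x) (f y))) as [| Hbig]; [assumption | exfalso].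
  destruct Hxz as [Hxz | <-]; [| lra].
  destruct Hzy as [Hzy | ->]; [| lra].
  destruct (MVT_cor2 f f' x z Hxz (fun p _ => Hder p ltac:(lra))) as [p1 [Hrise Hp1]].
  destruct (MVT_cor2 f f' z y Hzy (fun p _ => Hder p ltac:(lra))) as [p2 [Hfall Hp2]].
  assert (Hup : 0 < f' p1).
  { destruct (Rlt_or_le 0 (f' p1)) as [| Hle]; [assumption |]. nra. }
  pose proof (Hcross p1 p2 ltac:(lra) ltac:(lra) Hup). nra.
Qed.

Lemma quasi_convex_above_comp (F f g : R -> R) (a b : R) :
  quasi_convex_above f a ->
  (forall x, b < x -> a < g x) ->
  (forall x y, b < x -> x <= y -> g x <= g y) ->
  (forall x, b < x -> F x = f (g x)) ->
  quasi_convex_above F b.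
Proof.
  intros Hf Hga Hgmono HF x z y Hx [Hxz Hzy].
  rewrite !HF by lra.
  apply Hf; [apply Hga; lra | split; apply Hgmono; lra].
Qed.

Lemma quasi_convex_on_of_above (f : R -> R) (a lo hi : R) :
  a < lo -> quasi_convex_above f a -> quasi_convex_on f lo hi.
Proof.
  intros Hlo Hf x y lam Hx Hy Hlam.
  destruct (Rle_or_lt x y) as [Hxy | Hyx].
  - apply Hf; nra.
  - rewrite Rmax_comm. apply Hf; nra.
Qed.

(* R written in terms of the odds u = v/(1-v) of v = v_1(q), with
   c = e^{1 - theta_1}; see Rfun_as_odds below. *)
Definition R_of_odds (c u : R) : R := u + (1 + u) / (u * (1 + c * exp u)) - 1.

Definition slope_num (c u : R) : R :=
  (u ^ 2 - 1) + c * exp u * (u ^ 2 - u - 1) + (c * exp u) ^ 2 * u ^ 2.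

Definition R_of_odds' (c u : R) : R := slope_num c u / (u ^ 2 * (1 + c * exp u) ^ 2).

Lemma R_of_odds_derivative (c u : R) :
  0 < c -> 0 < u -> derivable_pt_lim (R_of_odds c) u (R_of_odds' c u).
Proof.
  intros Hc Hu. apply is_derive_Reals. unfold R_of_odds, R_of_odds', slope_num.
  pose proof (exp_pos u). assert (0 < c * exp u) by nra.
  auto_derive; [repeat split; nra |]. field. split; nra.
Qed.

Lemma R_of_odds'_pos (c u : R) : 0 < c -> 0 < u -> (0 < R_of_odds' c u <-> 0 < slope_num c u).
Proof.
  intros Hc Hu.
  assert (Hden : 0 < u ^ 2 * (1 + c * exp u) ^ 2).
  { pose proof (exp_pos u). apply Rmult_lt_0_compat; apply pow_lt; nra. }
  assert (Hnum : slope_num c u = R_of_odds' c u * (u ^ 2 * (1 + c * exp u) ^ 2))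
    by (unfold R_of_odds', Rdiv; rewrite Rmult_assoc, Rinv_l, Rmult_1_r; lra).
  rewrite Hnum. split; intros Hpos.
  - apply Rmult_lt_0_compat; assumption.
  - destruct (Rlt_or_le 0 (R_of_odds' c u)); [assumption | nra].
Qed.

(* slope_num c u = (c e^u)^2 slope_factor (1/c) u; slope_factor increases
   while u^2 < u + 1, and for u^2 >= u + 1 slope_num is evidently positive. *)
Definition slope_factor (k u : R) : R :=
  u ^ 2 + k * exp (- u) * (u ^ 2 - u - 1) + (k * exp (- u)) ^ 2 * (u ^ 2 - 1).

Definition slope_factor' (k u : R) : R :=
  2 * u + k * exp (- u) * (3 * u - u ^ 2) + (k * exp (- u)) ^ 2 * (2 + 2 * u - 2 * u ^ 2).

Lemma slope_num_factor (c u : R) : 0 < c -> slope_num c u = (c * exp u) ^ 2 * slope_factor (/ c) u.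
Proof.
  intros Hc. unfold slope_num, slope_factor. rewrite exp_Ropp.
  pose proof (exp_pos u). field. lra.
Qed.

Lemma slope_factor_derivative (k u : R) : derivable_pt_lim (slope_factor k) u (slope_factor' k u).
Proof. apply is_derive_Reals. unfold slope_factor, slope_factor'. auto_derive; [auto | ring]. Qed.

Lemma slope_factor_increasing (k u1 u2 : R) :
  0 < k -> 0 < u1 -> u1 < u2 -> u2 ^ 2 < u2 + 1 -> slope_factor k u1 < slope_factor k u2.
Proof.
  intros Hk Hu1 H12 Hu2.
  destruct (MVT_cor2 (slope_factor k) (slope_factor' k) u1 u2 H12
              (fun p _ => slope_factor_derivative k p)) as [p [Hdiff Hp]].
  assert (0 < slope_factor' k p).
  { unfold slope_factor'.
    assert (Ht : 0 < k * exp (- p)) by (apply Rmult_lt_0_compat; [lra | apply exp_pos]).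
    set (t := k * exp (- p)) in *.
    assert (p ^ 2 < p + 1) by (destruct (Rle_or_lt 1 (p + u2)); nra).
    assert (0 < t * (3 * p - p ^ 2)) by (apply Rmult_lt_0_compat; nra).
    assert (0 < t ^ 2 * (2 + 2 * p - 2 * p ^ 2)) by (apply Rmult_lt_0_compat; [apply pow_lt |]; nra).
    lra. }
  nra.
Qed.

Lemma slope_num_single_crossing (c u1 u2 : R) :
  0 < c -> 0 < u1 -> u1 < u2 -> 0 < slope_num c u1 -> 0 < slope_num c u2.
Proof.
  intros Hc Hu1 H12 Hpos.
  assert (Hw : forall u, 0 < c * exp u) by (intros; apply Rmult_lt_0_compat; [lra | apply exp_pos]).
  destruct (Rlt_or_le (u2 ^ 2) (u2 + 1)) as [Hsmall | Hlarge].
  - rewrite slope_num_factor in * by lra.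
    pose proof (pow_lt _ 2 (Hw u1)). pose proof (pow_lt _ 2 (Hw u2)).
    assert (0 < slope_factor (/ c) u1).
    { destruct (Rlt_or_le 0 (slope_factor (/ c) u1)); [assumption | nra]. }
    pose proof (slope_factor_increasing (/ c) u1 u2 (Rinv_0_lt_compat c Hc) Hu1 H12 Hsmall).
    apply Rmult_lt_0_compat; lra.
  - unfold slope_num. specialize (Hw u2). set (w := c * exp u2) in *. nra.
Qed.

Lemma R_of_odds_quasi_convex (c : R) : 0 < c -> quasi_convex_above (R_of_odds c) 0.
Proof.
  intros Hc. apply (quasi_convex_above_of_derivative _ (R_of_odds' c)).
  - intros u Hu. apply R_of_odds_derivative; assumption.
  - intros x y Hx Hxy Hpos.
    apply R_of_odds'_pos; [assumption | lra |].
    apply (slope_num_single_crossing c x); try assumption.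
    apply (R_of_odds'_pos c x); assumption.
Qed.

Lemma v1_correct (theta : nat -> R) (q : R) :
  0 < q -> h (v1 theta q) = q * exp (theta 1%nat - 1) /\ 0 < v1 theta q < 1.
Proof. intros Hq. apply V_correct. pose proof (exp_pos (theta 1%nat - 1)). nra. Qed.

Lemma odds_v1_pos (theta : nat -> R) (q : R) : 0 < q -> 0 < odds (v1 theta q).
Proof.
  intros Hq. destruct (v1_correct theta q Hq) as [_ Hv]. unfold odds.
  apply Rdiv_lt_0_compat; lra.
Qed.

Lemma odds_v1_le (theta : nat -> R) (q r : R) :
  0 < q -> q <= r -> odds (v1 theta q) <= odds (v1 theta r).
Proof.
  intros Hq Hqr. destruct (v1_correct theta r ltac:(lra)) as [_ Hv].
  pose proof (exp_pos (theta 1%nat - 1)).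
  assert (Hle : v1 theta q <= v1 theta r) by (apply V_le; nra).
  destruct Hle as [Hlt | ->]; [apply Rlt_le, odds_lt; lra | lra].
Qed.

(* Since v e^{u} = q e^{theta_1 - 1} for u = v/(1-v), we have q = c v e^u and
   1/v = (1+u)/u, which turns Rfun into R_of_odds c u. *)
Lemma Rfun_as_odds (theta : nat -> R) (q : R) :
  0 < q -> Rfun theta q = R_of_odds (exp (1 - theta 1%nat)) (odds (v1 theta q)).
Proof.
  intros Hq. destruct (v1_correct theta q Hq) as [Hh Hv].
  unfold Rfun, R_of_odds. unfold h in Hh.
  set (v := v1 theta q) in *. set (c := exp (1 - theta 1%nat)).
  assert (Hc : c * exp (odds v) = q / v).
  { unfold c. apply Rmult_eq_reg_r with v; [| lra].
    replace (q / v * v) with q by (field; lra).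
    replace (exp (1 - theta 1%nat) * exp (odds v) * v) with (exp (1 - theta 1%nat) * (v * exp (odds v))) by ring.
    rewrite Hh, Rmult_comm, Rmult_assoc, <- exp_plus.
    replace (theta 1%nat - 1 + (1 - theta 1%nat)) with 0 by ring. rewrite exp_0. ring. }
  rewrite Hc. unfold odds. field. lra.
Qed.

Theorem mainTheorem11 (n : nat) (theta : nat -> R)
  (hn : (2 <= n)%nat)
  (hmono : forall i j : nat, (1 <= i)%nat -> (i <= j)%nat -> (j <= n)%nat -> theta j <= theta i)
  (hnonneg : forall i : nat, (1 <= i)%nat -> (i <= n)%nat -> 0 <= theta i) :
  quasi_convex_on (Rfun theta) (qbar0 theta (1 :: 2 :: nil)%nat) (qbar0 theta (1 :: nil)%nat).
Proof.
  destruct (qbar0_correct theta (1 :: 2 :: nil)%nat ltac:(discriminate)) as [[Hqmin _] _].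
  apply (quasi_convex_on_of_above _ 0); [exact Hqmin |].
  apply (quasi_convex_above_comp _ (R_of_odds (exp (1 - theta 1%nat)))
           (fun q => odds (v1 theta q)) 0 0).
  - apply R_of_odds_quasi_convex, exp_pos.
  - apply odds_v1_pos.
  - apply odds_v1_le.
  - apply Rfun_as_odds.
Qed.
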